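(* Let $t>0$ and let $G$ be a graph containing neither $K_t$ nor $K_{t,t}$ as an induced subgraph. Then $\operatorname{tw}(G)\le 3(R(t,t)-1)\,2^{\operatorname{rw}(G)+1}-1$.
   Context: All graphs are finite and simple. $\operatorname{tw}$ denotes treewidth and $\operatorname{rw}$ denotes rank-width (in the sense of Oum and Seymour). $R(t,t)$ is the Ramsey number: every graph on at least $R(t,t)$ vertices contains a clique or a stable set of size $t$. *)

(* Finite simple graphs are symmetric irreflexive relations
   on a finType. *)
From mathcomp Require Import all_boot all_order all_algebra.
Set Implicit Arguments. Unset Strict Implicit. Unset Printing Implicit Defensive.
Import GRing.Theory.
Local Open Scope nat_scope.

Section Graphs.
Variable T : finType.
Variable e : rel T.

Definition is_clique (S : {set T}) : Prop :=
  forall x y, x \in S -> y \in S -> x != y -> e x y.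

Definition is_stable (S : {set T}) : Prop :=
  forall x y, x \in S -> y \in S -> ~~ e x y.

Definition has_induced_Kt (t : nat) : Prop :=
  exists S : {set T}, #|S| = t /\ is_clique S.

Definition has_induced_Ktt (t : nat) : Prop :=
  exists A B : {set T}, [/\ [disjoint A & B], #|A| = t, #|B| = t,
    is_stable A /\ is_stable B & forall a b, a \in A -> b \in B -> e a b].

End Graphs.

Definition acyclic (I : finType) (f : rel I) : Prop :=
  forall s : seq I, uniq s -> 3 <= size s -> ~~ cycle f s.

Definition is_tree (I : finType) (f : rel I) : Prop :=
  [/\ 0 < #|I|, symmetric f, irreflexive f,
      (forall i j, connect f i j) & acyclic f].

Definition degree (I : finType) (f : rel I) (i : I) : nat := #|[set j | f i j]|.

Definition is_tree_decomposition (T : finType) (e : rel T)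
  (I : finType) (f : rel I) (B : I -> {set T}) : Prop :=
  [/\ is_tree f,
      (forall v, exists i, v \in B i),
      (forall u v, e u v -> exists i, (u \in B i) && (v \in B i)) &
      (forall v i j, v \in B i -> v \in B j ->
          connect [rel x y | [&& f x y, v \in B x & v \in B y]] i j)].

Definition tw_le (T : finType) (e : rel T) (k : nat) : Prop :=
  exists (I : finType) (f : rel I) (B : I -> {set T}),
    is_tree_decomposition e f B /\ forall i, #|B i| <= k.+1.

Definition treewidth_is (T : finType) (e : rel T) (k : nat) : Prop :=
  tw_le e k /\ forall k', tw_le e k' -> k <= k'.

Definition cutrank (T : finType) (e : rel T) (X : {set T}) : nat :=
  \rank (\matrix_(a < #|X|, b < #|~: X|)
           ((e (enum_val a) (enum_val b))%:R : 'F_2))%R.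

Definition is_rank_decomposition (T : finType)
  (I : finType) (f : rel I) (L : T -> I) : Prop :=
  [/\ is_tree f, (forall i, degree f i <= 3), injective L,
      (forall v, degree f (L v) = 1) &
      (forall i, degree f i = 1 -> exists v, L v = i)].

Definition edge_side (T : finType) (I : finType) (f : rel I) (L : T -> I)
  (i j : I) : {set T} :=
  [set v | connect [rel x y | f x y && ~~ (((x == i) && (y == j)) ||
                                         ((x == j) && (y == i)))] i (L v)].

(* G has rank-width at most k (graphs on at most one vertex have rank-width 0) *)
Definition rw_le (T : finType) (e : rel T) (k : nat) : Prop :=
  #|T| <= 1 \/
  exists (I : finType) (f : rel I) (L : T -> I),
    is_rank_decomposition f L /\
    forall i j, f i j -> cutrank e (edge_side f L i j) <= k.

Definition rankwidth_is (T : finType) (e : rel T) (k : nat) : Prop :=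
  rw_le e k /\ forall k', rw_le e k' -> k <= k'.

Definition ramsey_prop (t n : nat) : Prop :=
  forall (U : finType) (r : rel U), symmetric r -> irreflexive r ->
    n <= #|U| -> exists S : {set U}, #|S| = t /\ (is_clique r S \/ is_stable r S).

Definition ramsey_number_is (t n : nat) : Prop :=
  ramsey_prop t n /\ forall m, ramsey_prop t m -> n <= m.

From mathcomp Require Import all_boot all_order all_algebra zify.
Set Implicit Arguments. Unset Strict Implicit. Unset Printing Implicit Defensive.

(* Fix a rank decomposition of width [k] with leaf map [L].  For a tree edge
   [ab] let [A] be the set of vertices whose leaves lie on the [a]-side, and
   call [u \in A] rare when fewer than [R] vertices of [A] have the same
   neighbourhood outside [A] as [u].  Such twin classes are determined by rows
   of the cut matrix of [A], so [A] has at most [2^k (R-1)] rare vertices.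
   Put [v] in the bag of a node [m] when [v] is rare on its side of every tree
   edge separating [L v] from [m]; such a bag lies in [L^-1(m)] plus the rare
   sets of the at most three edges at [m], so it has at most
   [1 + 3 2^k (R-1)] vertices.  The bags containing [v] form a subtree, since
   the condition only strengthens away from [L v].
   By Ramsey's theorem and the absence of an induced [K_t], a twin class of
   size at least [R] contains a stable set of size [t]; two such classes on
   opposite sides of an edge [uv] of the graph would be complete to each other
   and yield an induced [K_{t,t}].  So on every tree edge between [L u] and
   [L v], [u] or [v] is rare on its side.  Walking from [L u] to [L v], the
   side of [u] only grows, so once [u] is not rare it stays so; the node
   before the first such tree edge has both [u] and [v] in its bag. *)

Lemma card_bigcup_le (I T : finType) (J : {pred I}) (F : I -> {set T}) :
  #|\bigcup_(j in J) F j| <= \sum_(j in J) #|F j|.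
Proof.
elim/big_ind2: _ => [|m A n B hA hB|//]; first by rewrite cards0.
by rewrite (leq_trans (leq_card_setU A B)) // leq_add.
Qed.

Lemma card_le_fibres (A B : finType) (g : A -> B) (X : {set A}) k :
  (forall x, x \in X -> #|[set y in X | g y == g x]| <= k) -> #|X| <= #|g @: X| * k.
Proof.
move=> hfib; rewrite -sum1_card (partition_big_imset g) /= -sum_nat_const.
apply: leq_sum => _ /imsetP[x hx ->]; rewrite sum1dep_card.
by apply: leq_trans (hfib x hx); apply: subset_leq_card; apply/subsetP => y; rewrite !inE.
Qed.

Lemma card_rows_le (F : finFieldType) m n (M : 'M[F]_(m, n)) :
  #|[set row i M | i : 'I_m]| <= #|F| ^ \rank M.
Proof.
have rows_sub :
    [set row i M | i : 'I_m] \subset [set (D *m row_base M)%R | D : 'rV_(\rank M)].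
  apply/subsetP => _ /imsetP[i _ ->]; apply/imsetP.
  have /submxP[D ->] : (row i M <= row_base M)%MS by rewrite eq_row_base row_sub.
  by exists D.
apply: leq_trans (subset_leq_card rows_sub) _; apply: leq_trans (leq_imset_card _ _) _.
by rewrite card_mx mul1n.
Qed.

Section TwinClasses.
Variables (T : finType) (e : rel T).

Definition twins (S : {set T}) (u : T) : {set T} :=
  [set x in S | [forall y, (y \notin S) ==> (e x y == e u y)]].

Lemma twinsP (S : {set T}) u x :
  reflect (x \in S /\ forall y, y \notin S -> e x y = e u y) (x \in twins S u).
Proof.
rewrite inE; apply: (iffP andP) => [[xS /forallP H] | [xS H]]; split => //.
  by move=> y yS; apply/eqP; move: (H y); rewrite yS.
by apply/forallP => y; apply/implyP => /H ->.
Qed.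

Lemma twinsS (S S' : {set T}) u : S \subset S' -> twins S u \subset twins S' u.
Proof.
move=> sSS'; apply/subsetP => x /twinsP[xS H]; apply/twinsP; split.
  exact: subsetP xS.
by move=> y yS'; apply: H; apply: contra yS'; apply: subsetP.
Qed.

Variable R : nat.

Definition rare (S : {set T}) : {set T} := [set u in S | #|twins S u| < R].

Lemma rareS (S S' : {set T}) u : S \subset S' -> u \in S -> u \in rare S' -> u \in rare S.
Proof.
rewrite !inE => sSS' -> /andP[_]; apply: leq_ltn_trans.
exact/subset_leq_card/twinsS.
Qed.

Lemma card_rare (S : {set T}) : #|rare S| <= 2 ^ cutrank e S * (R - 1).
Proof.
pose M := (\matrix_(a < #|S|, b < #|~: S|) ((e (enum_val a) (enum_val b))%:R : 'F_2))%R.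
pose rho x : 'rV['F_2]_#|~: S| := (\row_b ((e x (enum_val b))%:R : 'F_2))%R.
have rho_twins x y : x \in S -> rho x = rho y -> x \in twins S y.
  move=> xS rxy; apply/twinsP; split=> // z zS; have zS' : z \in ~: S by rewrite inE.
  have := congr1 (fun r : 'rV_ _ => r 0 (enum_rank_in zS' z))%R rxy.
  by rewrite !mxE enum_rankK_in //; case: (e x z); case: (e y z).
have rho_rows : rho @: S \subset [set row i M | i : 'I_#|S|].
  apply/subsetP => _ /imsetP[x xS ->]; apply/imsetP; exists (enum_rank_in xS x) => //.
  by apply/rowP => b; rewrite !mxE enum_rankK_in.
have rare_sub : rare S \subset S by apply/subsetP => x; rewrite inE => /andP[].
apply: leq_trans (card_le_fibres (k := R - 1) (g := rho) _) _.
  move=> x; rewrite inE => /andP[xS small].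
  have fibre_sub : [set y in rare S | rho y == rho x] \subset twins S x.
    apply/subsetP => y; rewrite inE => /andP[/(subsetP rare_sub) yS /eqP].
    exact: rho_twins.
  by apply: leq_trans (subset_leq_card fibre_sub) _; lia.
rewrite leq_mul2r; apply/orP; right.
apply: leq_trans (subset_leq_card (imsetS rho rare_sub)) _.
rewrite (leq_trans (subset_leq_card rho_rows)) //.
by rewrite (leq_trans (card_rows_le M)) // card_Fp.
Qed.

Hypotheses (e_sym : symmetric e) (e_irr : irreflexive e).
Variable t : nat.
Hypotheses (noKt : ~ has_induced_Kt e t) (noKtt : ~ has_induced_Ktt e t).
Hypothesis ramseyR : ramsey_prop t R.

Lemma stable_subset (S : {set T}) :
  R <= #|S| -> exists2 S' : {set T}, S' \subset S & #|S'| = t /\ is_stable e S'.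
Proof.
move=> RS; pose r := [rel x y : {x | x \in S} | e (val x) (val y)].
have rsym : symmetric r by move=> x y /=; rewrite e_sym.
have rirr : irreflexive r by move=> x /=; rewrite e_irr.
have RU : R <= #|{: {x | x \in S}}| by rewrite card_sig.
have [S0 [cardS0 S0_homog]] := ramseyR rsym rirr RU.
have card_valS0 : #|val @: S0| = t by rewrite card_imset //; apply: val_inj.
exists (val @: S0); first by apply/subsetP => _ /imsetP[x _ ->]; apply: valP.
split=> //; case: S0_homog => [S0_clique | S0_stable].
  case: noKt; exists (val @: S0); split=> // _ _ /imsetP[x xS0 ->] /imsetP[y yS0 ->] nxy.
  by apply: S0_clique => //; apply: contra nxy => /eqP ->.
by move=> _ _ /imsetP[x xS0 ->] /imsetP[y yS0 ->]; apply: S0_stable.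
Qed.

Lemma rare_cross_edge (S : {set T}) u v :
  u \in S -> v \notin S -> e u v -> (u \in rare S) || (v \in rare (~: S)).
Proof.
move=> uS vS euv; apply/norP; rewrite !inE uS vS /= -!leqNgt.
move=> -[/stable_subset[A sA [cA stA]] /stable_subset[B sB [cB stB]]].
have inA x : x \in A -> x \in S /\ forall y, y \notin S -> e x y = e u y.
  by move/(subsetP sA)/twinsP.
have inB y : y \in B -> y \in ~: S /\ forall x, x \notin ~: S -> e y x = e v x.
  by move/(subsetP sB)/twinsP.
apply: noKtt; exists A, B; split=> //.
  apply/pred0P => x /=; apply/negP => /andP[/inA[xS _] /inB[]].
  by rewrite inE xS.
move=> x y /inA[_ ex] /inB[yS ey].
have yS' : y \notin S by rewrite inE in yS.
have uS' : u \notin ~: S by rewrite inE negbK.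
by rewrite ex // e_sym ey // e_sym.
Qed.
End TwinClasses.

Lemma path_first_failure (T : Type) (P : rel T) x s :
  path P x s \/ exists p b q, [/\ s = p ++ b :: q, path P x p & ~~ P (last x p) b].
Proof.
elim: s x => [|y s IH] x /=; first by left.
case Pxy: (P x y); last by right; exists [::], y, s; rewrite Pxy.
case: (IH y) => [-> | [p [b [q [-> Pp nPb]]]]]; first by left.
by right; exists (y :: p), b, q; rewrite /= Pxy.
Qed.

Section TreeSides.
Variables (I : finType) (f : rel I).

Definition deledge (a b : I) : rel I :=
  [rel x y | f x y && ~~ (((x == a) && (y == b)) || ((x == b) && (y == a)))].

Definition side (a b : I) : {set I} := [set x | connect (deledge a b) a x].

Lemma deledgeC a b : deledge a b =2 deledge b a.
Proof. by move=> x y; rewrite /deledge /= orbC. Qed.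

Lemma side_refl a b : a \in side a b.
Proof. by rewrite inE connect0. Qed.

Lemma path_deledge a b x s :
  (a \notin x :: s) || (b \notin x :: s) -> path f x s -> path (deledge a b) x s.
Proof.
elim: s x => [//|y s IH] x avoid /= /andP[fxy ps].
have avoid' : (a \notin y :: s) || (b \notin y :: s).
  by case/orP: avoid; rewrite !inE !negb_or => /andP[_ ->]; rewrite ?orbT.
rewrite IH // andbT /deledge /= fxy /= ![_ == a]eq_sym ![_ == b]eq_sym.
by case/orP: avoid; rewrite !inE !negb_or => /and3P[/negPf -> /negPf -> _]; rewrite ?andbF.
Qed.

Hypothesis ftree : is_tree f.

Let fsym : symmetric f. Proof. by case: ftree. Qed.
Let firr : irreflexive f. Proof. by case: ftree. Qed.
Let fconn : forall i j, connect f i j. Proof. by case: ftree. Qed.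
Let facyc : acyclic f. Proof. by case: ftree. Qed.

Lemma deledge_sym a b : symmetric (deledge a b).
Proof.
move=> x y; rewrite /deledge /= fsym; congr (_ && ~~ _).
by case: (x == a); case: (y == b); case: (x == b); case: (y == a).
Qed.

Lemma exists_uniq_path i j : exists s, [/\ path f i s, last i s = j & uniq (i :: s)].
Proof.
have /connectP[p fp ->] := fconn i j.
by case: (shortenP fp) => s fs us _; exists s.
Qed.

(* A path from [a] to [b] avoiding the edge [ab] closes a cycle with it. *)
Lemma deledge_disconnected a b : f a b -> ~~ connect (deledge a b) a b.
Proof.
move=> fab; apply/negP => /connectP[p pp lp].
move: lp; case: (shortenP pp) => {pp}p pp up _ lp.
have fsub : subrel (deledge a b) f by move=> x y /andP[].
have := facyc up; case: p pp up lp => [|c [|d p]] /= => [_ _ ab | |].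
- by move: fab; rewrite ab firr.
- by rewrite andbT => /andP[_] /negP nab _ bc; case: nab; rewrite bc !eqxx.
move=> /andP[fac /andP[fcd pp]] _ lp /(_ isT).
by rewrite /= rcons_path (fsub _ _ fac) (fsub _ _ fcd) (sub_path fsub pp) -lp fsym fab.
Qed.

Lemma sides_disjoint a b x : f a b -> x \in side a b -> x \in side b a -> False.
Proof.
move=> fab; rewrite !inE (eq_connect (deledgeC b a)) => ax bx.
apply: (negP (deledge_disconnected fab)); apply: connect_trans ax _.
by rewrite (sym_connect_sym (@deledge_sym a b)).
Qed.

Lemma sides_cover a b x : (x \in side a b) || (x \in side b a).
Proof.
have /connectP[s fs ->] := fconn a x; elim/last_ind: s fs => [|s y IH].
  by rewrite side_refl.
rewrite rcons_path last_rcons => /andP[/IH {}IH fzy].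
set z := last a s in IH fzy; case del: (deledge a b z y).
  have del' : deledge b a z y by rewrite -deledgeC.
  by case/orP: IH; rewrite !inE => zs; apply/orP; [left | right];
    apply: connect_trans zs (connect1 _).
move: del; rewrite /deledge /= fzy /= => /negbFE /orP[] /andP[_ /eqP->];
  by rewrite side_refl ?orbT.
Qed.

Lemma side_compl a b : f a b -> side b a = ~: side a b.
Proof.
move=> fab; apply/setP => x; rewrite [in RHS]inE.
apply/idP/negP => [xb xa | xa]; first exact: sides_disjoint fab xa xb.
by have := sides_cover a b x; move/negP: xa => /negbTE ->.
Qed.

Lemma path_crossing a b x s : f a b -> path f x s ->
  x \in side a b -> last x s \in side b a -> exists p q, s = p ++ b :: q /\ last x p = a.
Proof.
move=> fab; elim: s x => [|y s IH] x /=.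
  by move=> _ xa xb; case: (sides_disjoint fab xa xb).
move=> /andP[fxy fs] xa ys.
case: (boolP ((x == a) && (y == b))) => [/andP[/eqP-> /eqP->] | not_ab].
  by exists [::], s.
have ya : y \in side a b.
  have not_ba : ~~ ((x == b) && (y == a)).
    apply/negP => /andP[/eqP xb _]; rewrite xb in xa.
    exact: sides_disjoint fab xa (side_refl b a).
  move: xa; rewrite !inE => xa; apply: connect_trans xa (connect1 _).
  by rewrite /deledge /= fxy negb_or not_ab.
have [p [q [-> lp]]] := IH y fs ya ys.
by exists (y :: p), q.
Qed.

Lemma uniq_path_sides x p b q : path f x (p ++ b :: q) -> uniq (x :: p ++ b :: q) ->
  x \in side (last x p) b /\ {subset b :: q <= side b (last x p)}.
Proof.
set a := last x p; rewrite cat_path -cat_cons cat_uniq.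
move=> /andP[fp /andP[_ fq]] /and3P[_ disj _].
have b_notin : b \notin x :: p by apply: contra disj => bin; rewrite /= bin.
have a_notin : a \notin b :: q.
  by apply: contra disj => ain; apply/hasP; exists a => //; apply: mem_last.
split.
  rewrite inE (sym_connect_sym (@deledge_sym a b)); apply/connectP; exists p => //.
  by apply: path_deledge fp; rewrite b_notin orbT.
move=> y yin; rewrite inE; apply: path_connect yin.
by apply: path_deledge fq; rewrite a_notin orbT.
Qed.

Lemma side_prefix x p q a b : path f x (p ++ q) -> uniq (x :: p ++ q) -> f a b ->
  x \in side a b -> last x p \in side b a -> last x (p ++ q) \in side b a.
Proof.
move=> fpq upq fab xa pb; have := fpq; rewrite cat_path => /andP[fp _].
have [p1 [p2 [Ep la]]] := path_crossing fab fp xa pb.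
rewrite Ep -catA /= in fpq upq *; have [_ sub] := uniq_path_sides fpq upq.
by rewrite la in sub; apply: sub; rewrite last_cat /= mem_last.
Qed.

(* If [y] lay on the far side of [dc], the path from [a] to [y] avoiding [ab]
   would cross [dc] and reach [c]. *)
Lemma side_nested a b c d : f a b -> f d c ->
  c \in side b a -> a \in side d c -> side a b \subset side d c.
Proof.
move=> fab fdc cb ad; apply/subsetP => y ay.
apply/negPn/negP; rewrite -in_setC -side_compl // => yc.
move: ay; rewrite inE => /connectP[p dp ly].
have fp : path f a p by apply: sub_path dp => u w /andP[].
rewrite ly in yc; have [p1 [p2 [Ep _]]] := path_crossing fdc fp ad yc.
apply: (sides_disjoint fab _ cb); rewrite inE; apply: (path_connect dp).
by rewrite Ep inE mem_cat inE eqxx !orbT.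
Qed.

End TreeSides.

Section RankDecompositionBags.
Variables (T : finType) (e : rel T).
Hypotheses (e_sym : symmetric e) (e_irr : irreflexive e).
Variables (t R : nat).
Hypotheses (noKt : ~ has_induced_Kt e t) (noKtt : ~ has_induced_Ktt e t).
Hypothesis ramseyR : ramsey_prop t R.
Variables (I : finType) (f : rel I) (L : T -> I).
Hypotheses (ftree : is_tree f) (Linj : injective L).

Let fsym : symmetric f. Proof. by case: ftree. Qed.

Local Notation side := (side f).
Local Notation edge_side := (edge_side f L).

Lemma mem_edge_side v a b : (v \in edge_side a b) = (L v \in side a b).
Proof. by rewrite !inE. Qed.

Lemma edge_side_compl a b : f a b -> edge_side b a = ~: edge_side a b.
Proof.
by move=> fab; apply/setP => v; rewrite in_setC !mem_edge_side side_compl // in_setC.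
Qed.

Definition bag (m : I) : {set T} := [set v | [forall a, forall b,
  [&& f a b, L v \in side a b & m \in side b a] ==> (v \in rare e R (edge_side a b))]].

Lemma bagP v m :
  reflect (forall a b, f a b -> L v \in side a b -> m \in side b a ->
             v \in rare e R (edge_side a b))
          (v \in bag m).
Proof.
rewrite inE; apply: (iffP forallP) => [H a b fab va mb | H a].
  by move: (forallP (H a) b); rewrite fab va mb.
by apply/forallP => b; apply/implyP => /and3P[]; apply: H.
Qed.

Lemma bag_leaf v : v \in bag (L v).
Proof. by apply/bagP => a b fab va vb; case: (sides_disjoint ftree fab va vb). Qed.

Lemma bag_edge u v : e u v -> exists m, (u \in bag m) && (v \in bag m).
Proof.
move=> euv; have [s [fs ls us]] := exists_uniq_path ftree (L u) (L v).
pose P a b := u \in rare e R (edge_side a b).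
case: (path_first_failure P (L u) s) => [Ps | [p [b [q [Es Pp nPab]]]]].
  exists (L v); rewrite bag_leaf andbT; apply/bagP => c d fcd uc vd.
  rewrite -ls in vd; have [p [q [Es lp]]] := path_crossing ftree fcd fs uc vd.
  by move: Ps; rewrite Es cat_path lp => /and3P[].
set a := last (L u) p in nPab; exists a; apply/andP; split.
  apply/bagP => c d fcd uc ad.
  have fp : path f (L u) p by move: fs; rewrite Es cat_path => /andP[].
  have [p1 [p2 [Ep lp1]]] := path_crossing ftree fcd fp uc ad.
  by move: Pp; rewrite Ep cat_path lp1 => /and3P[].
apply/bagP => c d fcd vc ad.
rewrite Es in fs us ls; have [ua b_side] := uniq_path_sides ftree fs us.
have /andP[fp fbq] : path f (L u) p && path f a (b :: q) by rewrite -cat_path.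
have fab : f a b by case/andP: fbq.
have fdc : f d c by rewrite fsym.
have lq : last a (b :: q) \in side c d by rewrite /a -last_cat ls.
have [r1 [r2 [Eq _]]] := path_crossing ftree fdc fbq ad lq.
have cb : c \in side b a by apply: b_side; rewrite Eq mem_cat inE eqxx orbT.
have ab_dc := side_nested ftree fab fdc cb ad.
have sub_edge : edge_side a b \subset edge_side d c.
  by apply/subsetP => w; rewrite !mem_edge_side; apply: (subsetP ab_dc).
have u_dc : u \in edge_side d c by rewrite mem_edge_side (subsetP ab_dc _ ua).
have v_dc : v \notin edge_side d c by rewrite -in_setC -edge_side_compl // mem_edge_side.
have := rare_cross_edge e_sym e_irr noKt noKtt ramseyR u_dc v_dc euv.
rewrite -edge_side_compl // => /orP[u_rare | //].
by case/negP: nPab; apply: rareS sub_edge _ u_rare; rewrite mem_edge_side.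
Qed.

Lemma bag_connect v m :
  v \in bag m -> connect [rel x y | [&& f x y, v \in bag x & v \in bag y]] (L v) m.
Proof.
have [s [fs <- us]] := exists_uniq_path ftree (L v) m.
elim/last_ind: s fs us => [|s y IH]; first by rewrite connect0.
rewrite -cats1 => fsy usy; rewrite cats1 last_rcons => vy.
have := fsy; rewrite cat_path /= andbT => /andP[fs fzy].
have vz : v \in bag (last (L v) s).
  apply/bagP => a b fab va zb; apply: (bagP _ _ vy a b fab va).
  by have := side_prefix ftree fsy usy fab va zb; rewrite last_cat.
have us : uniq (L v :: s) by move: usy; rewrite -cat_cons cat_uniq => /and3P[].
by apply: connect_trans (IH fs us vz) (connect1 _); rewrite /= fzy vz.
Qed.

Lemma bag_tree_decomposition : is_tree_decomposition e f bag.
Proof.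
split=> //.
- by move=> v; exists (L v); apply: bag_leaf.
- exact: bag_edge.
- move=> v i j vi vj.
  have rsym : symmetric [rel x y | [&& f x y, v \in bag x & v \in bag y]].
    by move=> x y /=; rewrite fsym [(v \in bag x) && _]andbC.
  by rewrite (connect_trans _ (bag_connect vj)) // (sym_connect_sym rsym) bag_connect.
Qed.

Lemma bag_subset m :
  bag m \subset [set v | L v == m] :|: \bigcup_(j | f m j) rare e R (edge_side j m).
Proof.
apply/subsetP => v vm; rewrite !inE; case: eqVneq => //= Lvm.
have [s [fs ls us]] := exists_uniq_path ftree (L v) m.
case/lastP: s fs ls us => [_ /= Lvm' | s y]; first by rewrite Lvm' eqxx in Lvm.
rewrite last_rcons -cats1 => fs ym us; rewrite -ym in vm *.
have [vj yj] := uniq_path_sides ftree fs us; set j := last (L v) s in vj yj.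
have fjy : f j y by move: fs; rewrite cat_path => /and3P[].
apply/bigcupP; exists j; first by rewrite fsym.
exact: (bagP _ _ vm) fjy vj (yj y (mem_head _ _)).
Qed.

Variable k : nat.
Hypotheses (f_subcubic : forall i, degree f i <= 3)
  (cutrank_le : forall i j, f i j -> cutrank e (edge_side i j) <= k).

Lemma card_bag m : #|bag m| <= 1 + 3 * (2 ^ k * (R - 1)).
Proof.
apply: leq_trans (subset_leq_card (bag_subset m)) _.
apply: leq_trans (leq_card_setU _ _) (leq_add _ _).
  by apply/card_le1_eqP => x y; rewrite !inE => /eqP <- /eqP /Linj.
apply: leq_trans (card_bigcup_le _ _) _.
apply: (@leq_trans (\sum_(j | f m j) 2 ^ k * (R - 1))).
  apply: leq_sum => j fmj; apply: leq_trans (card_rare _ _ _) _.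
  by rewrite leq_mul2r leq_pexp2l ?cutrank_le ?orbT // fsym.
by rewrite sum_nat_const leq_mul2r -cardsE f_subcubic orbT.
Qed.

End RankDecompositionBags.

Lemma tw_le_card (T : finType) (e : rel T) : tw_le e #|T|.-1.
Proof.
exists unit, [rel _ _ | false], (fun _ => [set: T]); split; last first.
  by move=> _; rewrite cardsT leqSpred.
split=> //.
- split=> //; first by rewrite card_unit.
  + by move=> [] []; apply: connect0.
  + by move=> [|[] [|[] [|[] s]]].
- by move=> u v _; exists tt; rewrite !inE.
- by move=> v [] [] _ _; apply: connect0.
Qed.

Unset Implicit Arguments.
Theorem mainTheorem6 (t : nat) (T : finType) (e : rel T)
  (e_sym : symmetric e) (e_irr : irreflexive e) (t_pos : 0 < t)
  (noKt : ~ has_induced_Kt e t) (noKtt : ~ has_induced_Ktt e t)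
  (tw rw R : nat) (htw : treewidth_is e tw) (hrw : rankwidth_is e rw)
  (hR : ramsey_number_is t R) :
  tw <= 3 * (R - 1) * 2 ^ (rw + 1) - 1.
Proof.
case: htw => _ tw_min; case: hR => ramseyR _.
case: hrw => [[T_small | [I [f [L [[ftree f_subcubic Linj _ _] cutrank_le]]]]] _].
  by have := tw_min _ (tw_le_card e); lia.
have : tw <= 3 * (2 ^ rw * (R - 1)).
  apply: tw_min; exists I, f, (bag e R f L); split.
    exact: (bag_tree_decomposition e_sym e_irr noKt noKtt ramseyR L ftree).
  by move=> m; rewrite -add1n; apply: card_bag.
rewrite addn1 expnS; nia.
Qed.
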